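(* For every $0<\alpha<1$, the Marcinkiewicz space $M_\alpha$ of measurable functions $f$ on $(0,\infty)$ with $\|f\|_{M_\alpha}=\sup_{t>0}t^{\alpha-1}\int_0^t f^*(u)\,du<\infty$ does not belong to the class $\mathcal X$.
   Context: $f^*$ denotes the nonincreasing rearrangement. A pair $(f,g)$ satisfies the NP condition if there is $t_0>0$ with $f^*(t)\ge g^*(t)$ for $t\le t_0$ and $f^*(t)\le g^*(t)$ for $t\ge t_0$. $\mathcal X$ is the class of all rearrangement invariant spaces $X$ on $(0,\infty)$ such that for every pair $(f,g)$ with $f,g\in X$ satisfying the NP condition and $\|f\|_X\ge\|g\|_X$, one has $\|f^*\chi_{(0,s)}\|_X\ge\|g^*\chi_{(0,s)}\|_X$ for all $s>0$. *)

From HB Require Import structures.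
From mathcomp Require Import all_boot all_order all_algebra.
From mathcomp Require Import all_classical all_reals all_analysis.
Set Implicit Arguments. Unset Strict Implicit. Unset Printing Implicit Defensive.
Import Order.TTheory GRing.Theory Num.Theory.
Local Open Scope classical_set_scope.
Local Open Scope ring_scope.

Section Defs.
Variable R : realType.
Local Notation mu := (@lebesgue_measure R).

Definition distrib (f : R -> R) (l : R) : \bar R :=
  mu ([set x | 0 < x] `&` [set x | l < `|f x|]).

(* nonincreasing rearrangement f^*(t) = inf {l >= 0 : d_f(l) <= t}
   (extended-real valued; +oo when the set is empty) *)
Definition rearr (f : R -> R) (t : R) : \bar R :=
  ereal_inf [set l%:E | l in [set l : R | 0 <= l /\ (distrib f l <= t%:E)%E]].

Definition normM (alpha : R) (f : R -> R) : \bar R :=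
  ereal_sup [set ((t `^ (alpha - 1))%:E * \int[mu]_(u in [set` `]0%R, t]]) rearr f u)%E
            | t in [set t : R | 0 < t]].

Definition inM (alpha : R) (f : R -> R) : Prop :=
  measurable_fun [set x : R | 0 < x] f /\ (normM alpha f < +oo)%E.

Definition NP (f g : R -> R) : Prop :=
  exists t0 : R, 0 < t0 /\
    (forall t, 0 < t -> t <= t0 -> (rearr g t <= rearr f t)%E) /\
    (forall t, t0 <= t -> (rearr f t <= rearr g t)%E).

(* the function f^* chi_(0,s) (f^* is finite on (0,oo) for f in M_alpha) *)
Definition trunc_rearr (f : R -> R) (s : R) : R -> R :=
  fun u => if (0 < u) && (u < s) then fine (rearr f u) else 0.

Definition M_in_X (alpha : R) : Prop :=
  forall f g : R -> R, inM alpha f -> inM alpha g -> NP f g ->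
    (normM alpha g <= normM alpha f)%E ->
    forall s : R, 0 < s ->
      (normM alpha (trunc_rearr g s) <= normM alpha (trunc_rearr f s))%E.
End Defs.

(* Let a = 1 - alpha and let plateau p be the nonincreasing function equal to 1
   on (0, p) and to x^(-alpha) beyond p.  For p >= 1 with p^alpha < 1/a, the
   quantity t^(alpha-1) * int_0^t plateau p increases towards 1/a without
   reaching it, so f = plateau 1 and g = plateau c, with c = 1/a, both have
   M_alpha-norm 1/a; moreover f <= g with equality on (0, 1], which is the NP
   condition with t0 = 1.  Truncated at c, g^* chi_(0,c) = chi_(0,c) has norm at
   least c^alpha, whereas f^* chi_(0,c) has norm at most the value of
   t^(alpha-1) * int_0^t f at t = c, namely 1/a - (1/a - 1) c^(-a); this is
   smaller than c^alpha precisely by the strict Bernoulli inequality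
   c^a < 1 + a (c - 1). *)

From HB Require Import structures.
From mathcomp Require Import all_boot all_order all_algebra.
From mathcomp Require Import all_classical all_reals all_analysis.
From mathcomp Require Import measurable_realfun ring lra.
Import Order.TTheory GRing.Theory Num.Theory numFieldNormedType.Exports.
Set Implicit Arguments. Unset Strict Implicit.
Local Open Scope classical_set_scope.
Local Open Scope ring_scope.

Section powR_bounds.
Variable R : realType.
Implicit Types x r : R.

Lemma powR_continuous p x : 0 < x -> {for x, continuous (@powR R ^~ p)}.
Proof.
move=> x0; apply: differentiable_continuous; apply/derivable1_diffP.
by apply: derivable_powR; rewrite in_itv /= x0.
Qed.

Lemma powR_le_affine x r : 0 < x -> 0 <= r -> r <= 1 -> x `^ r <= 1 + r * (x - 1).
Proof.
move=> x0 r0 r1; have := concave_ln (Itv01 r0 r1) x0 ltr01.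
rewrite !convRE /= ln1 mulr0 addr0 => ln_conv.
have -> : 1 + r * (x - 1) = r * x + (1 - r) * 1 by ring.
rewrite -[leRHS]lnK; last first.
  by rewrite posrE; have := convR_gt0 (Itv01 r0 r1) x0 ltr01; rewrite convRE.
by rewrite /powR gt_eqF // ler_expR; exact: ln_conv.
Qed.

(* Squaring the weak inequality at [sqrt x] gains r (1 - r) (sqrt x - 1)^2. *)
Lemma powR_lt_affine x r : 1 < x -> 0 < r -> r < 1 -> x `^ r < 1 + r * (x - 1).
Proof.
move=> x1 r0 r1; set y := Num.sqrt x.
have x0 : 0 < x := lt_trans ltr01 x1.
have xE : x = y * y by rewrite -expr2 sqr_sqrtr // ltW.
have y1 : 1 < y by rewrite -sqrtr1 ltr_sqrt.
have y0 : 0 < y := lt_trans ltr01 y1.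
have yr := powR_le_affine y0 (ltW r0) (ltW r1).
rewrite xE powRM ?(ltW y0) //.
apply: (@le_lt_trans _ _ ((1 + r * (y - 1)) * (1 + r * (y - 1)))).
  by apply: ler_pM; rewrite ?powR_ge0.
have : 0 < r * (1 - r) * ((y - 1) * (y - 1)) by rewrite !mulr_gt0 // subr_gt0.
lra.
Qed.

Lemma powR_lt_self x r : 1 < x -> r < 1 -> x `^ r < x.
Proof.
move=> x1 r1; have x0 : 0 < x := lt_trans ltr01 x1.
rewrite -ltr_ln ?posrE ?powR_gt0 // ln_powR gtr_pMl //.
by rewrite ln_gt0.
Qed.

End powR_bounds.

Section rearrangement.
Variable R : realType.
Local Notation mu := (@lebesgue_measure R).
Implicit Types (h : R -> R) (t x : R).

(* The sets measured by [distrib] need not be measurable: this is monotonicity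
   of the outer measure. *)
Lemma le_lebesgue_measure (A B : set R) : A `<=` B -> (mu A <= mu B)%E.
Proof.
by move=> AB; rewrite /lebesgue_measure /lebesgue_stieltjes_measure /=; apply: le_outer_measure.
Qed.

Lemma lebesgue_measure_itv_oo t : 0 <= t -> mu `]0, t[ = t%:E.
Proof.
move=> t0; rewrite lebesgue_measure_itv/= lte_fin.
by case: ltgtP t0 => // [t_gt0|<-] _; rewrite ?sube0 ?sub0r ?oppr0.
Qed.

Lemma rearr_ext h1 h2 : (forall x, 0 < x -> h1 x = h2 x) -> rearr h1 = rearr h2.
Proof.
move=> h12; apply: funext => t; rewrite /rearr /distrib.
congr ereal_inf; apply/seteqP; split => _ [l [l0 dl] <-]; exists l => //;
  (split => //; apply: le_trans dl; apply: le_lebesgue_measure => x [/= x0 hx]).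
- by split => //=; rewrite h12.
- by split => //=; rewrite -h12.
Qed.

Lemma normM_ext al h1 h2 : (forall x, 0 < x -> h1 x = h2 x) ->
  normM al h1 = normM al h2.
Proof. by move=> h12; rewrite /normM (rearr_ext h12). Qed.

Lemma rearr_nonincreasing h t : 0 < t -> nonincreasing_fun h ->
  (forall x, 0 <= h x) -> h x @[x --> t^'+] --> h t -> rearr h t = (h t)%:E.
Proof.
move=> t0 hdec h0 hrc; apply/le_anti/andP; split.
  apply: ereal_inf_lbound; exists (h t) => //; split => //.
  rewrite /distrib -(lebesgue_measure_itv_oo (ltW t0)); apply: le_lebesgue_measure.
  move=> x [/= x0]; rewrite ger0_norm // => htx; rewrite /= in_itv /= x0 /=.
  by rewrite ltNge; apply: contraTN htx => /hdec; rewrite -leNgt.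
apply/ereal_infP => _ [l [l0 dl] <-]; rewrite lee_fin leNgt; apply/negP => lt_l.
have [t' [tt' lt']] := filter_ex (filterI (nbhs_right_gt t) (cvgr_gt _ hrc _ lt_l)).
suff : (t'%:E <= t%:E)%E by rewrite lee_fin leNgt tt'.
apply: le_trans dl; rewrite /distrib -(lebesgue_measure_itv_oo (ltW (lt_trans t0 tt'))).
apply: le_lebesgue_measure => x; rewrite /= in_itv /= => /andP[x0 xt']; split => //=.
by rewrite ger0_norm //; apply: lt_le_trans lt' (hdec _ _ (ltW xt')).
Qed.

End rearrangement.

Section interval_integrals.
Variable R : realType.
Local Notation mu := (@lebesgue_measure R).
Implicit Types (h : R -> R) (k s t x y : R).

Lemma nonincreasing_measurable_EFin (D : set R) h : measurable D ->
  nonincreasing_fun h -> measurable_fun D (fun x => (h x)%:E).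
Proof. by move=> mD hdec; apply/measurable_EFinP; apply: nonincreasing_measurable. Qed.

Lemma integral_itv_split h x s t : x <= s -> s <= t ->
  nonincreasing_fun h -> (forall u, 0 <= h u) ->
  (\int[mu]_(u in `]x, t]) (h u)%:E =
   \int[mu]_(u in `]x, s]) (h u)%:E + \int[mu]_(u in `]s, t]) (h u)%:E)%E.
Proof.
move=> xs st hdec h0.
have -> : [set` `]x, t]] = [set` `]x, s]] `|` [set` `]s, t]] :> set R.
  apply/seteqP; split => u /=; rewrite !in_itv /=.
    by case/andP => xu ut; case: (leP u s) => us; [left|right]; rewrite ?xu ?us ?ut.
  by case=> /andP[xu su]; rewrite ?xu ?su ?(le_trans su st) ?(le_lt_trans xs xu).
rewrite ge0_integral_setU //=.
- by apply: nonincreasing_measurable_EFin => //; apply: measurableU.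
- by move=> u _; rewrite lee_fin.
- rewrite disj_set2E; apply/eqP/seteqP; split => u //=; rewrite !in_itv /=.
  by case=> /andP[_ us] /andP[su _]; move: (lt_le_trans su us); rewrite ltxx.
Qed.

Lemma integral_itv_cst h k x y : x <= y -> nonincreasing_fun h ->
  (forall u, x < u < y -> h u = k) ->
  (\int[mu]_(u in `]x, y]) (h u)%:E = (k * (y - x))%:E)%E.
Proof.
move=> xy hdec hk.
rewrite -integral_itv_bndo_bndc; last exact: nonincreasing_measurable_EFin.
rewrite (eq_integral (fun=> k%:E)); last by move=> u; rewrite inE /= => /hk ->.
rewrite integral_cst //= lebesgue_measure_itv /= lte_fin.
case: ifPn => [_|]; first by rewrite -EFinD -EFinM.
rewrite -leNgt => yx; have -> : y = x by apply/le_anti; rewrite yx xy.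
by rewrite subrr mulr0 mule0.
Qed.

Lemma integral_powRN al x y : al < 1 -> 0 < x -> x <= y ->
  (\int[mu]_(u in `]x, y]) (u `^ (- al))%:E =
   ((y `^ (1 - al) - x `^ (1 - al)) / (1 - al))%:E)%E.
Proof.
move=> al1 x0; rewrite le_eqVlt => /orP[/eqP <-|xy].
  by rewrite set_itv_ge ?bnd_simp ?ltxx // integral_set0 subrr mul0r.
have a0 : 0 < 1 - al by rewrite subr_gt0.
rewrite integral_itv_obnd_cbnd; last first.
  by apply/measurable_funTS/measurable_EFinP; apply: measurable_powR.
transitivity (\int[mu]_(u in `[x, y])
               (((1 - al)^-1)%:E * ((1 - al) * u `^ (- al))%:E))%E.
  by apply: eq_integral => u _; rewrite -EFinM mulrA mulVf ?mul1r // gt_eqF.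
rewrite ge0_integralZl_EFin //; last 3 first.
- by move=> u _; rewrite lee_fin mulr_ge0 ?powR_ge0 // ltW.
- apply/measurable_funTS/measurable_EFinP.
  by apply: measurable_funM => //; exact: measurable_powR.
- by rewrite invr_ge0 ltW.
rewrite (@continuous_FTC2 R _ (@powR R ^~ (1 - al)) x y xy).
- by rewrite -EFinB -EFinM mulrC.
- apply: continuous_in_subspaceT => u /set_mem; rewrite /= in_itv /= => /andP[xu _].
  by apply: cvgM; [exact: cvg_cst | apply: powR_continuous; apply: lt_le_trans xu].
- split.
  + move=> u; rewrite in_itv /= => /andP[xu _]; apply: derivable_powR.
    by rewrite in_itv /= andbT; apply: lt_trans xu.
  + by apply: cvg_at_right_filter; apply: powR_continuous.
  + by apply: cvg_at_left_filter; apply: powR_continuous; apply: lt_trans xy.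
- move=> u; rewrite in_itv /= => /andP[xu _].
  rewrite powR_derive1; last by rewrite in_itv /= andbT; apply: lt_trans xu.
  by congr (_ * _); congr (_ `^ _); rewrite addrAC subrr sub0r.
Qed.

End interval_integrals.

Section cutoff.
Variable R : realType.
Local Notation mu := (@lebesgue_measure R).
Implicit Types (h : R -> R) (al s t : R).

Definition cutoff s h x := if x < s then h x else 0.

Lemma cutoff_ge0 s h : (forall x, 0 <= h x) -> forall x, 0 <= cutoff s h x.
Proof. by move=> h0 x; rewrite /cutoff; case: ifP. Qed.

Lemma cutoff_nonincreasing s h : (forall x, 0 <= h x) ->
  nonincreasing_fun h -> nonincreasing_fun (cutoff s h).
Proof.
move=> h0 hdec x y xy; rewrite /cutoff; case: ifPn => ys.
  by rewrite (le_lt_trans xy ys) hdec.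
exact: (cutoff_ge0 s h0).
Qed.

Lemma cutoff_right_cvg s h t : (t < s -> h x @[x --> t^'+] --> h t) ->
  cutoff s h x @[x --> t^'+] --> cutoff s h t.
Proof.
move=> hrc; rewrite {2}/cutoff; case: ltP => ts.
  suff E : {near t^'+, h =1 cutoff s h} by apply: cvg_trans (hrc ts); apply: near_eq_cvg.
  by near=> x; rewrite /cutoff ifT //; near: x; exact: nbhs_right_lt.
suff E : {near t^'+, cst 0 =1 cutoff s h} by exact: cvg_trans (near_eq_cvg E) (cvg_cst 0).
near=> x; rewrite /cutoff ifN // -leNgt; apply: le_trans ts (ltW _).
by near: x; exact: nbhs_right_gt.
Unshelve. all: by end_near.
Qed.

Lemma integral_cutoff h s t : 0 <= s -> nonincreasing_fun h -> (forall x, 0 <= h x) ->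
  (\int[mu]_(u in `]0%R, t]) (cutoff s h u)%:E =
   \int[mu]_(u in `]0%R, Num.min t s]) (h u)%:E)%E.
Proof.
move=> s0 hdec h0; have cdec := cutoff_nonincreasing s h0 hdec.
have below t' : t' <= s -> (\int[mu]_(u in `]0%R, t']) (cutoff s h u)%:E =
                           \int[mu]_(u in `]0%R, t']) (h u)%:E)%E.
  move=> ts; rewrite -!integral_itv_bndo_bndc; try exact: nonincreasing_measurable_EFin.
  apply: eq_integral => u; rewrite inE /= in_itv /= => /andP[_ ut].
  by rewrite /cutoff (lt_le_trans ut ts).
case: (leP t s) => ts; first exact: below.
rewrite (integral_itv_split s0 (ltW ts) cdec); last exact: cutoff_ge0.
rewrite below // (@integral_itv_cst _ _ 0 s t) ?(ltW ts) ?mul0r ?adde0 //.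
by move=> u /andP[su _]; rewrite /cutoff ltNge (ltW su).
Qed.

Definition normM_at al h t : \bar R :=
  ((t `^ (al - 1))%:E * \int[mu]_(u in `]0%R, t]) (h u)%:E)%E.

Lemma normM_nonincreasing al h : nonincreasing_fun h -> (forall x, 0 <= h x) ->
  (forall t, 0 < t -> h x @[x --> t^'+] --> h t) ->
  normM al h = ereal_sup [set normM_at al h t | t in [set t | 0 < t]].
Proof.
move=> hdec h0 hrc; rewrite /normM; congr ereal_sup.
suff rearrE t : (\int[mu]_(u in [set` `]0%R, t]]) rearr h u =
                 \int[mu]_(u in `]0%R, t]) (h u)%:E)%E.
  by apply/seteqP; split => _ [t t0 <-]; exists t; rewrite // /normM_at rearrE.
apply: eq_integral => u; rewrite inE /= in_itv /= => /andP[u0 _].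
by rewrite rearr_nonincreasing //; exact: hrc.
Qed.

Lemma normM_at_cutoff_le al h s t : al <= 1 -> 0 < s -> 0 < t ->
  nonincreasing_fun h -> (forall x, 0 <= h x) ->
  (normM_at al (cutoff s h) t <= normM_at al h (Num.min t s))%E.
Proof.
move=> al1 s0 t0 hdec h0; rewrite /normM_at integral_cutoff ?(ltW s0) //.
apply: lee_wpmul2r; first by apply: integral_ge0 => u _; rewrite lee_fin.
rewrite lee_fin -(opprB 1 al) !powRN.
have m0 : 0 < Num.min t s by rewrite lt_min s0 t0.
rewrite lef_pV2 ?posrE ?powR_gt0 //.
by apply: ge0_ler_powR; rewrite ?nnegrE ?subr_ge0 ?(ltW m0) ?(ltW t0) // ge_min lexx.
Qed.

Lemma normM_at_cutoff al h s t : 0 <= s -> t <= s ->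
  nonincreasing_fun h -> (forall x, 0 <= h x) ->
  normM_at al (cutoff s h) t = normM_at al h t.
Proof. by move=> s0 ts hdec h0; rewrite /normM_at integral_cutoff ?min_l. Qed.

Section cutoff_norm.
Variables (al : R) (h : R -> R).
Hypotheses (hdec : nonincreasing_fun h) (h0 : forall x, 0 <= h x)
  (hrc : forall t, 0 < t -> h x @[x --> t^'+] --> h t).

Lemma normM_cutoff s : normM al (cutoff s h) =
  ereal_sup [set normM_at al (cutoff s h) t | t in [set t | 0 < t]].
Proof.
apply: normM_nonincreasing; [exact: cutoff_nonincreasing | exact: cutoff_ge0 |].
by move=> t t0; apply: cutoff_right_cvg => _; exact: hrc.
Qed.

Lemma normM_trunc_rearr s : normM al (trunc_rearr h s) = normM al (cutoff s h).
Proof.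
apply: normM_ext => x x0; rewrite /trunc_rearr /cutoff x0 /=.
by case: ifP => // _; rewrite rearr_nonincreasing //; exact: hrc.
Qed.

Lemma normM_at_le_normM_cutoff s : 0 < s -> (normM_at al h s <= normM al (cutoff s h))%E.
Proof.
move=> s0; rewrite normM_cutoff -(@normM_at_cutoff al h s s) ?(ltW s0) //.
by apply: ereal_sup_ubound; exists s.
Qed.

Lemma normM_cutoff_le s : al <= 1 -> 0 < s ->
  (forall t, 0 < t -> t <= s -> (normM_at al h t <= normM_at al h s)%E) ->
  (normM al (cutoff s h) <= normM_at al h s)%E.
Proof.
move=> al1 s0 hmono; rewrite normM_cutoff; apply: ge_ereal_sup => _ [t t0 <-].
apply: le_trans (normM_at_cutoff_le al1 s0 t0 hdec h0) _.
by apply: hmono; rewrite ?lt_min ?t0 ?s0 // ge_min lexx orbT.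
Qed.

End cutoff_norm.

End cutoff.

Section plateau.
Variables (R : realType) (al : R).
Hypotheses (al0 : 0 < al) (al1 : al < 1).
Local Notation mu := (@lebesgue_measure R).
Local Notation a := (1 - al).
Local Notation ia := (1 - al)^-1.
Implicit Types (p t x : R).

Definition plateau p x := if x < p then 1 else x `^ (- al).

Lemma a_gt0 : 0 < a. Proof. by rewrite subr_gt0. Qed.

Lemma ia_gt1 : 1 < ia.
Proof. by rewrite invf_gt1 ?a_gt0 // ltrBlDr ltrDl. Qed.

Lemma powRN_le x y : 0 < x -> x <= y -> y `^ (- al) <= x `^ (- al).
Proof.
move=> x0 xy; rewrite !powRN lef_pV2 ?posrE ?powR_gt0 ?(lt_le_trans x0 xy) //.
by apply: ge0_ler_powR; rewrite ?nnegrE ?(ltW al0) ?(ltW x0) ?(ltW (lt_le_trans x0 xy)).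
Qed.

Lemma powRN_le1 x : 1 <= x -> x `^ (- al) <= 1.
Proof. by move=> x1; have := powRN_le ltr01 x1; rewrite powR1. Qed.

Lemma plateau_ge0 p x : 0 <= plateau p x.
Proof. by rewrite /plateau; case: ifP => // _; rewrite powR_ge0. Qed.

Lemma plateau_nonincreasing p : 1 <= p -> nonincreasing_fun (plateau p).
Proof.
move=> p1 x y xy; rewrite /plateau.
case: (ltP y p) => yp; first by rewrite (le_lt_trans xy yp).
case: ifPn => [_|]; last first.
  by rewrite -leNgt => px; apply: powRN_le; rewrite // (lt_le_trans ltr01) // (le_trans p1).
by rewrite powRN_le1 // (le_trans p1).
Qed.

Lemma plateau_right_cvg p t : 0 < t -> plateau p x @[x --> t^'+] --> plateau p t.
Proof.
move=> t0; rewrite {2}/plateau; case: ltP => tp.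
  suff E : {near t^'+, cst 1 =1 plateau p}.
    by apply: (@cvg_trans _ (cst (1:R) @ t^'+)); [exact: near_eq_cvg | exact: cvg_cst].
  by near=> x; rewrite /plateau ifT //; near: x; exact: nbhs_right_lt.
suff E : {near t^'+, @powR R ^~ (- al) =1 plateau p}.
  apply: (@cvg_trans _ (@powR R ^~ (- al) @ t^'+)); first exact: near_eq_cvg.
  by apply: cvg_at_right_filter; apply: powR_continuous.
near=> x; rewrite /plateau ifN // -leNgt; apply: le_trans tp (ltW _).
by near: x; exact: nbhs_right_gt.
Unshelve. all: by end_near.
Qed.

Lemma plateau_eq1 p x : 1 <= p -> x <= 1 -> plateau p x = 1.
Proof.
move=> p1 x1; rewrite /plateau; case: ltP => // px.
have -> : x = 1 by apply/le_anti; rewrite x1 (le_trans p1).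
by rewrite powR1.
Qed.

Lemma plateau_le p q x : 1 <= p -> p <= q -> plateau p x <= plateau q x.
Proof.
move=> p1 pq; rewrite /plateau; case: (ltP x p) => xp.
  by rewrite (lt_le_trans xp pq).
by case: ifP => // _; rewrite powRN_le1 // (le_trans p1).
Qed.

Lemma integral_plateau_le p t : 1 <= p -> 0 <= t -> t <= p ->
  (\int[mu]_(u in `]0%R, t]) (plateau p u)%:E = t%:E)%E.
Proof.
move=> p1 t0 tp.
rewrite (@integral_itv_cst _ _ 1 0 t t0 (plateau_nonincreasing p1)) ?mul1r ?subr0 //.
by move=> u /andP[_ ut]; rewrite /plateau (lt_le_trans ut tp).
Qed.

Lemma integral_plateau_ge p t : 1 <= p -> p <= t ->
  (\int[mu]_(u in `]0%R, t]) (plateau p u)%:E = (p + (t `^ a - p `^ a) / a)%:E)%E.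
Proof.
move=> p1 pt; have p0 : 0 < p := lt_le_trans ltr01 p1.
rewrite (integral_itv_split (ltW p0) pt (plateau_nonincreasing p1) (plateau_ge0 p)).
rewrite integral_plateau_le ?(ltW p0) //.
have -> : (\int[mu]_(u in `]p, t]) (plateau p u)%:E =
           \int[mu]_(u in `]p, t]) (u `^ (- al))%:E)%E.
  apply: eq_integral => u; rewrite inE /= in_itv /= => /andP[pu _].
  by rewrite /plateau ltNge (ltW pu).
by rewrite integral_powRN // -EFinD.
Qed.

Lemma normM_at_plateau_le p t : 1 <= p -> 0 < t -> t <= p ->
  normM_at al (plateau p) t = (t `^ al)%:E.
Proof.
move=> p1 t0 tp; rewrite /normM_at integral_plateau_le ?(ltW t0) // -EFinM.
by rewrite mulrC mulr_powRB1 ?(ltW t0).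
Qed.

Lemma normM_at_plateau_ge p t : 1 <= p -> p <= t ->
  normM_at al (plateau p) t = (ia - p `^ a * (ia - p `^ al) / t `^ a)%:E.
Proof.
move=> p1 pt; have p0 : 0 < p := lt_le_trans ltr01 p1.
have t0 : 0 < t := lt_le_trans p0 pt.
rewrite /normM_at integral_plateau_ge // -EFinM; congr EFin.
have -> : al - 1 = - a by rewrite opprB.
have {1}-> : p = p `^ a * p `^ al.
  by rewrite -powRD subrK ?powRr1 ?(ltW p0) // oner_eq0.
have Ta : t `^ a != 0 by rewrite gt_eqF ?powR_gt0.
by rewrite powRN; field; rewrite Ta gt_eqF ?a_gt0.
Qed.

Lemma normM_at_plateau_lt p t : 1 <= p -> p `^ al < ia -> 0 < t ->
  (normM_at al (plateau p) t < ia%:E)%E.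
Proof.
move=> p1 pal t0; have p0 : 0 < p := lt_le_trans ltr01 p1.
case: (leP t p) => tp.
  rewrite normM_at_plateau_le // lte_fin; apply: le_lt_trans pal.
  by apply: ge0_ler_powR; rewrite ?nnegrE ?(ltW al0) ?(ltW t0) ?(ltW p0).
rewrite normM_at_plateau_ge ?(ltW tp) // lte_fin gtrBl.
by rewrite !mulr_gt0 ?invr_gt0 ?powR_gt0 ?subr_gt0.
Qed.

Lemma normM_at_plateau_approx p e : 1 <= p -> p `^ al < ia -> 0 < e ->
  exists2 t, 0 < t & ((ia - e)%:E <= normM_at al (plateau p) t)%E.
Proof.
move=> p1 pal e0; have p0 : 0 < p := lt_le_trans ltr01 p1.
set K := p `^ a * (ia - p `^ al).
have K0 : 0 < K by rewrite mulr_gt0 ?powR_gt0 ?subr_gt0.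
set t := Num.max p ((K / e) `^ ia).
have pt : p <= t by rewrite le_max lexx.
exists t; first exact: lt_le_trans pt.
rewrite normM_at_plateau_ge // -/K lee_fin lerD2l lerN2.
rewrite ler_pdivrMr ?powR_gt0 ?(lt_le_trans p0 pt) // -ler_pdivrMl //.
apply: (@le_trans _ _ (((K / e) `^ ia) `^ a)).
  by rewrite -powRrM mulVf ?gt_eqF ?a_gt0 // powRr1 ?divr_ge0 ?(ltW K0) ?(ltW e0) // mulrC.
apply: ge0_ler_powR; rewrite ?nnegrE ?powR_ge0 ?(ltW a_gt0) ?(le_trans (ltW p0) pt) //.
by rewrite le_max lexx orbT.
Qed.

Lemma rearr_plateau p t : 1 <= p -> 0 < t -> rearr (plateau p) t = (plateau p t)%:E.
Proof.
move=> p1 t0; apply: rearr_nonincreasing => //.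
- exact: plateau_nonincreasing.
- exact: plateau_ge0.
- exact: plateau_right_cvg.
Qed.

Lemma normM_plateau p : 1 <= p -> p `^ al < ia -> normM al (plateau p) = ia%:E.
Proof.
move=> p1 pal; rewrite normM_nonincreasing; last 3 first.
- exact: plateau_nonincreasing.
- exact: plateau_ge0.
- exact: plateau_right_cvg.
apply/le_anti/andP; split.
  by apply: ge_ereal_sup => _ [t t0 <-]; exact/ltW/normM_at_plateau_lt.
apply/lee_subgt0Pr => e e0; have [t t0 ht] := normM_at_plateau_approx p1 pal e0.
by apply: le_ereal_sup_tmp; exists (normM_at al (plateau p) t); [exists t | rewrite -EFinB].
Qed.

Lemma normM_at_plateau_nondecreasing p s t : 1 <= p -> p `^ al <= ia ->
  0 < s -> s <= t -> (normM_at al (plateau p) s <= normM_at al (plateau p) t)%E.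
Proof.
move=> p1 pal s0 st; have p0 : 0 < p := lt_le_trans ltr01 p1.
have powR_al_le x y : 0 < x -> x <= y -> x `^ al <= y `^ al.
  move=> x0 xy; apply: ge0_ler_powR; rewrite ?nnegrE ?(ltW al0) ?(ltW x0) //.
  exact: le_trans (ltW x0) xy.
have beyond x y : p <= x -> x <= y ->
    (normM_at al (plateau p) x <= normM_at al (plateau p) y)%E.
  move=> px xy; have x0 := lt_le_trans p0 px.
  rewrite !normM_at_plateau_ge ?(le_trans px xy) // lee_fin lerD2l lerN2.
  apply: ler_wpM2l; first by rewrite mulr_ge0 ?powR_ge0 ?subr_ge0.
  rewrite lef_pV2 ?posrE ?powR_gt0 ?(lt_le_trans x0 xy) //.
  by apply: ge0_ler_powR; rewrite ?nnegrE ?subr_ge0 ?(ltW al1) ?(ltW x0) ?(le_trans (ltW x0) xy).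
case: (leP t p) => tp.
  by rewrite !normM_at_plateau_le ?(le_trans st tp) ?(lt_le_trans s0 st) // lee_fin powR_al_le.
case: (leP s p) => sp; last exact: beyond (ltW sp) st.
apply: le_trans (beyond p t (lexx p) (ltW tp)).
by rewrite !normM_at_plateau_le // lee_fin powR_al_le.
Qed.

Lemma normM_at_plateau1_lt c : 1 < c -> (normM_at al (plateau 1) c < (c `^ al)%:E)%E.
Proof.
move=> c1; have c0 : 0 < c := lt_trans ltr01 c1.
rewrite normM_at_plateau_ge ?lexx ?(ltW c1) // !powR1 mul1r lte_fin.
set T := c `^ a; have T0 : 0 < T by rewrite powR_gt0.
have cE : c = T * c `^ al by rewrite -powRD subrK ?powRr1 ?(ltW c0) // oner_eq0.
have bern : T - 1 < a * (c - 1).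
  by rewrite ltrBlDl; apply: powR_lt_affine; rewrite ?a_gt0 // ltrBlDr ltrDl.
rewrite -(ltr_pM2r T0) mulrBl divfK ?gt_eqF // [_ `^ al * _]mulrC -cE.
have -> : ia * T - (ia - 1) = ia * (T - 1) + 1 by ring.
rewrite -ltrBrDr; apply: (@lt_le_trans _ _ (ia * (a * (c - 1)))).
  by rewrite ltr_pM2l ?invr_gt0 ?a_gt0.
by rewrite mulrA mulVf ?gt_eqF ?a_gt0 // mul1r.
Qed.

Lemma NP_plateau q : 1 <= q -> NP (plateau 1) (plateau q).
Proof.
move=> q1; exists 1; split => //; split => t.
  move=> t0 t1; rewrite !rearr_plateau // lee_fin !plateau_eq1 //.
move=> t1; rewrite !rearr_plateau ?(lt_le_trans ltr01 t1) // lee_fin.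
exact: plateau_le.
Qed.

Lemma inM_plateau p : 1 <= p -> p `^ al < ia -> inM al (plateau p).
Proof.
move=> p1 pal; split; last by rewrite normM_plateau ?ltry.
by apply: measurable_funTS; apply: nonincreasing_measurable => //; exact: plateau_nonincreasing.
Qed.

End plateau.

Theorem mainTheorem16 (R : realType) (alpha : R) :
  0 < alpha -> alpha < 1 -> ~ M_in_X alpha.
Proof.
move=> al0 al1 inX; set c := (1 - alpha)^-1.
have c1 : 1 < c := ia_gt1 al0 al1.
have c0 : 0 < c := lt_trans ltr01 c1.
have c_al : c `^ alpha < c := powR_lt_self c1 al1.
have one_al : 1 `^ alpha < c by rewrite powR1.
have f_dec := plateau_nonincreasing al0 (lexx 1).
have g_dec := plateau_nonincreasing al0 (ltW c1).
have f_cvg := fun t (t0 : 0 < t) => @plateau_right_cvg R alpha 1 t t0.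
have g_cvg := fun t (t0 : 0 < t) => @plateau_right_cvg R alpha c t t0.
have := inX _ _ (inM_plateau al0 al1 (lexx 1) one_al)
  (inM_plateau al0 al1 (ltW c1) c_al) (NP_plateau al0 (ltW c1)).
rewrite !normM_plateau ?lexx ?(ltW c1) // => /(_ erefl c c0).
rewrite (normM_trunc_rearr _ f_dec (plateau_ge0 alpha 1) f_cvg).
rewrite (normM_trunc_rearr _ g_dec (plateau_ge0 alpha c) g_cvg).
have lb := normM_at_le_normM_cutoff alpha g_dec (plateau_ge0 alpha c) g_cvg c0.
rewrite (normM_at_plateau_le al0 (ltW c1) c0 (lexx c)) in lb.
have ub := normM_cutoff_le f_dec (plateau_ge0 alpha 1) f_cvg (ltW al1) c0
  (fun t t0 tc => normM_at_plateau_nondecreasing al0 al1 (lexx 1) (ltW one_al) t0 tc).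
move=> /(le_trans lb)/le_trans/(_ ub).
by rewrite leNgt normM_at_plateau1_lt.
Qed.
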